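(* Let $\xi$ be a vector field and $\varphi$ a function on a spacetime $(M,g)$, and suppose a null tetrad is preferred relative to $\xi$. Then the tetrad is Lie recurrent relative to $\xi$ with associated factor $\varphi$ if and only if $\xi$ is a (C)KV with conformal factor $\varphi$.
   Context: $(M,g)$ is a 4-dimensional Lorentzian manifold; $\pounds$ is the ordinary Lie derivative. $\xi$ is a (C)KV with conformal factor $\varphi$ if $\pounds_\xi g_{\mu\nu}=\varphi g_{\mu\nu}$. A null tetrad $(l,n,m,\overline m)$: $l,n$ real null, $m$ complex null, $l_\mu n^\mu=1$, $m_\mu\overline m^\mu=-1$, other inner products zero. It is Lie recurrent relative to $\xi$ with associated factor $\varphi$ if $\pounds_\xi l^\mu=-\frac12\varphi l^\mu$, $\pounds_\xi n^\mu=-\frac12\varphi n^\mu$, $\pounds_\xi m^\mu=-\frac12\varphi m^\mu$. Null directions are preferred relative to $\xi$ if $\overline m_\mu\pounds_\xi l^\mu=l_\mu\pounds_\xi\overline m^\mu$ and $m_\mu\pounds_\xi n^\mu=n_\mu\pounds_\xi m^\mu$. A quantity $\eta$ has GHP weight $(p,q)$ if under $l\to A^2l$, $n\to A^{-2}n$, $m\to e^{i\alpha_0}m$ it becomes $\lambda^p\overline\lambda^q\eta$, $\lambda=Ae^{i\alpha_0/2}$; GHP Lie derivative $\text{\L}_\xi\eta=\pounds_\xi\eta+\frac{p+q}{4}(l_\mu\pounds_\xi n^\mu-n_\mu\pounds_\xi l^\mu)\eta+\frac{p-q}{4}(\overline m_\mu\pounds_\xi m^\mu-m_\mu\pounds_\xi\overline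 m^\mu)\eta$. The gauge is preferred relative to $\xi$ if $\text{\L}_\xi\eta=\pounds_\xi\eta$ for every quantity $\eta$. A tetrad is preferred relative to $\xi$ if its null directions and its gauge are both preferred. *)

(* Local (coordinate-chart) formalization of
   Lie derivatives of a metric, vector fields and scalars on an open
   subset U of R^4.  Indices mu, nu range over 0..3. *)
From Stdlib Require Import Reals ZArith.
From Coquelicot Require Import Coquelicot.

Set Implicit Arguments.

Open Scope R_scope.

Definition Point := (R * R * R * R)%type.

Definition coord (x : Point) (mu : nat) : R :=
  match x with (x0, x1, x2, x3) =>
    match mu with 0 => x0 | 1 => x1 | 2 => x2 | _ => x3 end end.

Definition shift (x : Point) (mu : nat) (t : R) : Point :=
  match x with (x0, x1, x2, x3) =>
    match mu with
    | 0 => (x0 + t, x1, x2, x3)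
    | 1 => (x0, x1 + t, x2, x3)
    | 2 => (x0, x1, x2 + t, x3)
    | _ => (x0, x1, x2, x3 + t)
    end end.

Definition open4 (U : Point -> Prop) : Prop :=
  forall x, U x -> exists eps : R, 0 < eps /\
    forall y, (forall mu, (mu < 4)%nat -> Rabs (coord y mu - coord x mu) < eps) -> U y.

Definition pd (f : Point -> R) (mu : nat) (x : Point) : R :=
  Derive (fun t => f (shift x mu t)) 0.

Definition has_pd (f : Point -> R) (x : Point) : Prop :=
  forall mu, (mu < 4)%nat -> ex_derive (fun t => f (shift x mu t)) 0.

Definition pdC (f : Point -> C) (mu : nat) (x : Point) : C :=
  (pd (fun y => Re (f y)) mu x, pd (fun y => Im (f y)) mu x).

Definition sum4 (f : nat -> R) : R := f 0%nat + f 1%nat + f 2%nat + f 3%nat.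
Definition sum4C (f : nat -> C) : C :=
  (f 0%nat + f 1%nat + f 2%nat + f 3%nat)%C.

Definition VField := Point -> nat -> R.
Definition CVField := Point -> nat -> C.
Definition Metric := Point -> nat -> nat -> R.

Definition liftC (V : VField) : CVField := fun x mu => RtoC (V x mu).
Definition conjV (V : CVField) : CVField := fun x mu => Cconj (V x mu).

Definition LieS (xi : VField) (eta : Point -> C) (x : Point) : C :=
  sum4C (fun r => (RtoC (xi x r) * pdC eta r x)%C).

Definition LieV (xi : VField) (V : CVField) (x : Point) (mu : nat) : C :=
  sum4C (fun r => (RtoC (xi x r) * pdC (fun y => V y mu) r x
                   - V x r * RtoC (pd (fun y => xi y mu) r x))%C).

Definition LieG (xi : VField) (g : Metric) (x : Point) (mu nu : nat) : R :=
  sum4 (fun r => xi x r * pd (fun y => g y mu nu) r x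
               + g x r nu * pd (fun y => xi y r) mu x
               + g x mu r * pd (fun y => xi y r) nu x).

Definition gdot (g : Metric) (x : Point) (u v : nat -> C) : C :=
  sum4C (fun mu => sum4C (fun nu => (RtoC (g x mu nu) * u mu * v nu)%C)).

(** g is a symmetric metric on U (its Lorentzian signature is forced by the
    existence of the null tetrad). *)
Definition symmetric_metric (U : Point -> Prop) (g : Metric) : Prop :=
  forall x, U x -> forall mu nu, (mu < 4)%nat -> (nu < 4)%nat ->
    g x mu nu = g x nu mu.

Definition regular_data (U : Point -> Prop) (xi : VField) (g : Metric)
  (l n : VField) (m : CVField) : Prop :=
  forall x, U x -> forall mu, (mu < 4)%nat ->
    has_pd (fun y => xi y mu) x /\ has_pd (fun y => l y mu) x /\
    has_pd (fun y => n y mu) x /\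
    has_pd (fun y => Re (m y mu)) x /\ has_pd (fun y => Im (m y mu)) x /\
    (forall nu, (nu < 4)%nat -> has_pd (fun y => g y mu nu) x).

Definition null_tetrad (U : Point -> Prop) (g : Metric)
  (l n : VField) (m : CVField) : Prop :=
  forall x, U x ->
    let L := liftC l x in let N := liftC n x in
    let Mv := m x in let Mb := conjV m x in
    gdot g x L L = RtoC 0 /\ gdot g x N N = RtoC 0 /\
    gdot g x Mv Mv = RtoC 0 /\ gdot g x Mb Mb = RtoC 0 /\
    gdot g x L N = RtoC 1 /\ gdot g x Mv Mb = RtoC (-1) /\
    gdot g x L Mv = RtoC 0 /\ gdot g x L Mb = RtoC 0 /\
    gdot g x N Mv = RtoC 0 /\ gdot g x N Mb = RtoC 0.

Definition conformal_killing (U : Point -> Prop) (g : Metric) (xi : VField)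
  (phi : Point -> R) : Prop :=
  forall x, U x -> forall mu nu, (mu < 4)%nat -> (nu < 4)%nat ->
    LieG xi g x mu nu = phi x * g x mu nu.

Definition lie_recurrent (U : Point -> Prop) (xi : VField) (phi : Point -> R)
  (l n : VField) (m : CVField) : Prop :=
  forall x, U x -> forall mu, (mu < 4)%nat ->
    LieV xi (liftC l) x mu = RtoC (- / 2 * phi x * l x mu) /\
    LieV xi (liftC n) x mu = RtoC (- / 2 * phi x * n x mu) /\
    LieV xi m x mu = (RtoC (- / 2 * phi x) * m x mu)%C.

Definition preferred_directions (U : Point -> Prop) (g : Metric) (xi : VField)
  (l n : VField) (m : CVField) : Prop :=
  forall x, U x ->
    gdot g x (conjV m x) (LieV xi (liftC l) x) =
      gdot g x (liftC l x) (LieV xi (conjV m) x) /\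
    gdot g x (m x) (LieV xi (liftC n) x) =
      gdot g x (liftC n x) (LieV xi m x).

Definition GHPLie (g : Metric) (xi : VField) (l n : VField) (m : CVField)
  (p q : Z) (eta : Point -> C) (x : Point) : C :=
  (LieS xi eta x
   + RtoC (IZR (p + q) / 4) *
       (gdot g x (liftC l x) (LieV xi (liftC n) x)
        - gdot g x (liftC n x) (LieV xi (liftC l) x)) * eta x
   + RtoC (IZR (p - q) / 4) *
       (gdot g x (conjV m x) (LieV xi m x)
        - gdot g x (m x) (LieV xi (conjV m) x)) * eta x)%C.

Definition preferred_gauge (U : Point -> Prop) (g : Metric) (xi : VField)
  (l n : VField) (m : CVField) : Prop :=
  forall (p q : Z) (eta : Point -> C) x, U x ->
    GHPLie g xi l n m p q eta x = LieS xi eta x.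

Definition preferred_tetrad (U : Point -> Prop) (g : Metric) (xi : VField)
  (l n : VField) (m : CVField) : Prop :=
  preferred_directions U g xi l n m /\ preferred_gauge U g xi l n m.

(* At every point of U the tetrad T = (l, n, m, mbar) is a frame whose Gram matrix
   g(T_i, T_j) is constant on U.  The Lie derivative of each Gram entry therefore
   vanishes, and the Leibniz rule turns this into
     (L_xi g)(T_i, T_j) + g(L_xi T_i, T_j) + g(T_i, L_xi T_j) = 0.
   If L_xi T_i = -phi/2 T_i for all i, this says that L_xi g and phi g agree on all
   pairs of frame vectors, hence everywhere.  Conversely, if L_xi g = phi g, the
   defects A_ij = g(T_i, L_xi T_j) + phi/2 g(T_i, T_j) are antisymmetric in (i, j).
   The preferred gauge (weights (2,2) and (2,-2)) and the preferred null directions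
   make A symmetric on the pairs (l, n), (m, mbar), (l, mbar) and (n, m), complex
   conjugation transports these to the remaining pairs, so A = 0, i.e. every
   L_xi T_j equals -phi/2 T_j. *)

From Stdlib Require Import Reals Lia Lra.
From Coquelicot Require Import Coquelicot.
From mathcomp Require all_boot all_algebra Rstruct.

Open Scope R_scope.

(** * Partial derivatives *)

Lemma shift_0 (x : Point) (r : nat) : shift x r 0 = x.
Proof.
  destruct x as [[[x0 x1] x2] x3]; destruct r as [|[|[|r]]]; simpl;
    rewrite Rplus_0_r; reflexivity.
Qed.

Lemma pd_ext (f h : Point -> R) r x : (forall y, f y = h y) -> pd f r x = pd h r x.
Proof. intros E; unfold pd; apply Derive_ext; intros; apply E. Qed.

Lemma pd_const (c : R) r x : pd (fun _ => c) r x = 0.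
Proof. apply (Derive_const c). Qed.

Lemma pd_opp (f : Point -> R) r x : pd (fun y => - f y) r x = - pd f r x.
Proof. apply (Derive_opp (fun t => f (shift x r t))). Qed.

Section PartialDerivatives.
Variables (f h : Point -> R) (x : Point).
Hypotheses (Hf : has_pd f x) (Hh : has_pd h x).

Lemma has_pd_plus : has_pd (fun y => f y + h y) x.
Proof. intros r Hr; apply (ex_derive_plus (fun t => f (shift x r t))); auto. Qed.

Lemma has_pd_minus : has_pd (fun y => f y - h y) x.
Proof. intros r Hr; apply (ex_derive_minus (fun t => f (shift x r t))); auto. Qed.

Lemma has_pd_mult : has_pd (fun y => f y * h y) x.
Proof. intros r Hr; apply (ex_derive_mult (fun t => f (shift x r t))); auto. Qed.

Lemma pd_plus r : (r < 4)%nat -> pd (fun y => f y + h y) r x = pd f r x + pd h r x.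
Proof. intros Hr; apply (Derive_plus (fun t => f (shift x r t))); auto. Qed.

Lemma pd_minus r : (r < 4)%nat -> pd (fun y => f y - h y) r x = pd f r x - pd h r x.
Proof. intros Hr; apply (Derive_minus (fun t => f (shift x r t))); auto. Qed.

Lemma pd_mult r : (r < 4)%nat -> pd (fun y => f y * h y) r x = pd f r x * h x + f x * pd h r x.
Proof.
  intros Hr; unfold pd; rewrite (Derive_mult (fun t => f (shift x r t))), shift_0; auto.
Qed.

End PartialDerivatives.

Lemma has_pd_const (c : R) x : has_pd (fun _ => c) x.
Proof. intros r _; apply ex_derive_const. Qed.

Lemma has_pd_opp (f : Point -> R) x : has_pd f x -> has_pd (fun y => - f y) x.
Proof. intros Hf r Hr; apply (ex_derive_opp (fun t => f (shift x r t))); auto. Qed.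

Definition has_pdC (f : Point -> C) (x : Point) : Prop :=
  has_pd (fun y => Re (f y)) x /\ has_pd (fun y => Im (f y)) x.

Lemma has_pdC_plus (f h : Point -> C) x :
  has_pdC f x -> has_pdC h x -> has_pdC (fun y => (f y + h y)%C) x.
Proof. intros [Rf If] [Rh Ih]; split; apply has_pd_plus; assumption. Qed.

Lemma has_pdC_mult (f h : Point -> C) x :
  has_pdC f x -> has_pdC h x -> has_pdC (fun y => (f y * h y)%C) x.
Proof.
  intros [Rf If] [Rh Ih]; split.
  - apply has_pd_minus; apply has_pd_mult; assumption.
  - apply has_pd_plus; apply has_pd_mult; assumption.
Qed.

Lemma has_pdC_RtoC (f : Point -> R) x : has_pd f x -> has_pdC (fun y => RtoC (f y)) x.
Proof. intros Hf; split; [exact Hf | exact (has_pd_const 0 x)]. Qed.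

Lemma has_pdC_conj (f : Point -> C) x : has_pdC f x -> has_pdC (fun y => Cconj (f y)) x.
Proof. intros [Rf If]; split; [exact Rf | apply has_pd_opp; exact If]. Qed.

Lemma has_pdC_sum4C (F : Point -> nat -> C) x :
  (forall mu, (mu < 4)%nat -> has_pdC (fun y => F y mu) x) ->
  has_pdC (fun y => sum4C (F y)) x.
Proof.
  intros HF; unfold sum4C.
  apply has_pdC_plus; [apply has_pdC_plus; [apply has_pdC_plus |] |]; apply HF; lia.
Qed.

Lemma pdC_plus (f h : Point -> C) r x : (r < 4)%nat -> has_pdC f x -> has_pdC h x ->
  pdC (fun y => (f y + h y)%C) r x = (pdC f r x + pdC h r x)%C.
Proof.
  intros Hr [Rf If] [Rh Ih]; unfold pdC; apply injective_projections.
  - exact (pd_plus _ _ x Rf Rh r Hr).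
  - exact (pd_plus _ _ x If Ih r Hr).
Qed.

Lemma pdC_mult (f h : Point -> C) r x : (r < 4)%nat -> has_pdC f x -> has_pdC h x ->
  pdC (fun y => (f y * h y)%C) r x = (pdC f r x * h x + f x * pdC h r x)%C.
Proof.
  intros Hr [Rf If] [Rh Ih]; unfold pdC.
  rewrite (pd_ext (fun y => Re (f y * h y)%C)
             (fun y => Re (f y) * Re (h y) - Im (f y) * Im (h y))) by reflexivity.
  rewrite (pd_ext (fun y => Im (f y * h y)%C)
             (fun y => Re (f y) * Im (h y) + Im (f y) * Re (h y))) by reflexivity.
  rewrite (pd_minus _ _ x (has_pd_mult _ _ x Rf Rh) (has_pd_mult _ _ x If Ih) r Hr),
    (pd_plus _ _ x (has_pd_mult _ _ x Rf Ih) (has_pd_mult _ _ x If Rh) r Hr),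
    (pd_mult _ _ x Rf Rh r Hr), (pd_mult _ _ x If Ih r Hr),
    (pd_mult _ _ x Rf Ih r Hr), (pd_mult _ _ x If Rh r Hr).
  apply injective_projections; simpl; unfold Re, Im; ring.
Qed.

Lemma pdC_RtoC (f : Point -> R) r x : pdC (fun y => RtoC (f y)) r x = RtoC (pd f r x).
Proof. unfold pdC; simpl; rewrite pd_const; reflexivity. Qed.

Lemma pdC_conj (f : Point -> C) r x : pdC (fun y => Cconj (f y)) r x = Cconj (pdC f r x).
Proof. unfold pdC; simpl; rewrite pd_opp; reflexivity. Qed.

Lemma pdC_sum4C (F : Point -> nat -> C) r x : (r < 4)%nat ->
  (forall mu, (mu < 4)%nat -> has_pdC (fun y => F y mu) x) ->
  pdC (fun y => sum4C (F y)) r x = sum4C (fun mu => pdC (fun y => F y mu) r x).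
Proof.
  intros Hr HF; unfold sum4C.
  assert (F0 := HF 0%nat ltac:(lia)); assert (F1 := HF 1%nat ltac:(lia));
    assert (F2 := HF 2%nat ltac:(lia)); assert (F3 := HF 3%nat ltac:(lia)).
  rewrite !pdC_plus; auto; apply has_pdC_plus; auto; apply has_pdC_plus; auto.
Qed.

(** * The Leibniz rule for the Lie derivative of a contraction *)

Lemma sum4C_ext (f h : nat -> C) :
  (forall mu, (mu < 4)%nat -> f mu = h mu) -> sum4C f = sum4C h.
Proof. intros E; unfold sum4C; rewrite !E by lia; reflexivity. Qed.

Lemma pdC_gdot (g : Metric) (u v : CVField) r x : (r < 4)%nat ->
  (forall mu nu, (mu < 4)%nat -> (nu < 4)%nat -> has_pd (fun y => g y mu nu) x) ->
  (forall mu, (mu < 4)%nat -> has_pdC (fun y => u y mu) x) ->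
  (forall mu, (mu < 4)%nat -> has_pdC (fun y => v y mu) x) ->
  pdC (fun y => gdot g y (u y) (v y)) r x =
  sum4C (fun mu => sum4C (fun nu =>
    RtoC (pd (fun y => g y mu nu) r x) * u x mu * v x nu
    + RtoC (g x mu nu) * pdC (fun y => u y mu) r x * v x nu
    + RtoC (g x mu nu) * u x mu * pdC (fun y => v y nu) r x))%C.
Proof.
  intros Hr Hg Hu Hv.
  assert (Hguv : forall mu nu, (mu < 4)%nat -> (nu < 4)%nat ->
            has_pdC (fun y => RtoC (g y mu nu) * u y mu * v y nu)%C x).
  { intros mu nu Hmu Hnu.
    apply has_pdC_mult; [apply has_pdC_mult; [apply has_pdC_RtoC|] |]; auto. }
  unfold gdot; rewrite pdC_sum4C by (auto; intros; apply has_pdC_sum4C; auto).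
  apply sum4C_ext; intros mu Hmu; rewrite pdC_sum4C by auto.
  apply sum4C_ext; intros nu Hnu.
  rewrite pdC_mult, pdC_mult, pdC_RtoC; auto using has_pdC_mult, has_pdC_RtoC.
  ring.
Qed.

Lemma LieS_gdot (g : Metric) (xi : VField) (u v : CVField) x :
  (forall mu nu, (mu < 4)%nat -> (nu < 4)%nat -> has_pd (fun y => g y mu nu) x) ->
  (forall mu, (mu < 4)%nat -> has_pdC (fun y => u y mu) x) ->
  (forall mu, (mu < 4)%nat -> has_pdC (fun y => v y mu) x) ->
  LieS xi (fun y => gdot g y (u y) (v y)) x =
  (gdot (LieG xi g) x (u x) (v x)
   + gdot g x (LieV xi u x) (v x) + gdot g x (u x) (LieV xi v x))%C.
Proof.
  intros Hg Hu Hv; unfold LieS.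
  rewrite (sum4C_ext _ (fun r => RtoC (xi x r) * sum4C (fun mu => sum4C (fun nu =>
    RtoC (pd (fun y => g y mu nu) r x) * u x mu * v x nu
    + RtoC (g x mu nu) * pdC (fun y => u y mu) r x * v x nu
    + RtoC (g x mu nu) * u x mu * pdC (fun y => v y nu) r x)))%C)
    by (intros; rewrite pdC_gdot; auto).
  unfold gdot, LieG, LieV, sum4, sum4C; rewrite ?RtoC_plus, ?RtoC_mult; ring.
Qed.

Lemma coord_shift_le (x : Point) (r mu : nat) (t : R) :
  Rabs (coord (shift x r t) mu - coord x mu) <= Rabs t.
Proof.
  destruct x as [[[x0 x1] x2] x3].
  destruct r as [|[|[|r]]]; destruct mu as [|[|[|mu]]]; simpl;
    match goal with
    | |- Rabs ?a <= _ =>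
        (replace a with t by ring; apply Rle_refl)
        || (replace a with 0 by ring; rewrite Rabs_R0; apply Rabs_pos)
    end.
Qed.

Lemma pd_locally_const (U : Point -> Prop) (f : Point -> R) r x :
  open4 U -> U x -> (forall y, U y -> f y = f x) -> pd f r x = 0.
Proof.
  intros HU Ux Hf; destruct (HU x Ux) as [eps [Heps Hball]]; unfold pd.
  rewrite (Derive_ext_loc _ (fun _ => f x)).
  - apply Derive_const.
  - exists (mkposreal eps Heps); intros t Ht.
    change (Rabs (t - 0) < eps) in Ht; rewrite Rminus_0_r in Ht.
    apply Hf, Hball; intros mu _.
    eapply Rle_lt_trans; [apply coord_shift_le | exact Ht].
Qed.

Lemma LieS_locally_const (U : Point -> Prop) (xi : VField) (eta : Point -> C) (c : C) x :
  open4 U -> U x -> (forall y, U y -> eta y = c) -> LieS xi eta x = RtoC 0.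
Proof.
  intros HU Ux Hc.
  assert (Hpd : forall r, pdC eta r x = RtoC 0).
  { intros r; unfold pdC.
    rewrite (pd_locally_const U (fun y => Re (eta y)) r x),
      (pd_locally_const U (fun y => Im (eta y)) r x);
      auto; intros y Uy; rewrite (Hc y Uy), (Hc x Ux); reflexivity. }
  unfold LieS, sum4C; rewrite !Hpd; apply injective_projections; simpl; ring.
Qed.

Lemma Cconj_RtoC (r : R) : Cconj (RtoC r) = RtoC r.
Proof. unfold Cconj, RtoC; simpl; rewrite Ropp_0; reflexivity. Qed.

Lemma RtoC_opp_twice_half (r : R) : RtoC r = (- (RtoC (- / 2 * r) + RtoC (- / 2 * r)))%C.
Proof. rewrite <- RtoC_plus, <- RtoC_opp; f_equal; field. Qed.

Lemma Csym_antisym_eq0 (a b : C) : (a + b)%C = RtoC 0 -> a = b -> a = RtoC 0.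
Proof.
  intros Hsum <-; apply injective_projections;
    [apply (f_equal fst) in Hsum | apply (f_equal snd) in Hsum]; simpl in *; lra.
Qed.

Lemma gdot_ext (g : Metric) x (u u' v v' : nat -> C) :
  (forall mu, (mu < 4)%nat -> u mu = u' mu) -> (forall mu, (mu < 4)%nat -> v mu = v' mu) ->
  gdot g x u v = gdot g x u' v'.
Proof. intros Eu Ev; unfold gdot, sum4C; rewrite !Eu, !Ev by lia; reflexivity. Qed.

Lemma gdot_sym (g : Metric) x (u v : nat -> C) :
  (forall mu nu, (mu < 4)%nat -> (nu < 4)%nat -> g x mu nu = g x nu mu) ->
  gdot g x u v = gdot g x v u.
Proof.
  intros Hs; unfold gdot, sum4C.
  rewrite (Hs 1%nat 0%nat), (Hs 2%nat 0%nat), (Hs 3%nat 0%nat), (Hs 2%nat 1%nat),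
    (Hs 3%nat 1%nat), (Hs 3%nat 2%nat) by lia.
  ring.
Qed.

Lemma gdot_conj (g : Metric) x (u v : nat -> C) :
  gdot g x (fun mu => Cconj (u mu)) (fun nu => Cconj (v nu)) = Cconj (gdot g x u v).
Proof. unfold gdot, sum4C; rewrite !Cplus_conj, !Cmult_conj, !Cconj_RtoC; reflexivity. Qed.

Lemma gdot_scal_l (g : Metric) x (c : C) (u v : nat -> C) :
  gdot g x (fun mu => c * u mu)%C v = (c * gdot g x u v)%C.
Proof. unfold gdot, sum4C; ring. Qed.

Lemma gdot_scal_r (g : Metric) x (c : C) (u v : nat -> C) :
  gdot g x u (fun mu => c * v mu)%C = (c * gdot g x u v)%C.
Proof. unfold gdot, sum4C; ring. Qed.

Lemma gdot_sub_scal_r (g : Metric) x (c : C) (u v w : nat -> C) :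
  gdot g x u (fun mu => v mu - c * w mu)%C = (gdot g x u v - c * gdot g x u w)%C.
Proof. unfold gdot, sum4C; ring. Qed.

Lemma gdot_sub_scal_metric (h g : Metric) (phi : Point -> R) x (u v : nat -> C) :
  gdot (fun y mu nu => h y mu nu - phi y * g y mu nu) x u v =
  (gdot h x u v - RtoC (phi x) * gdot g x u v)%C.
Proof. unfold gdot, sum4C; rewrite !RtoC_minus, !RtoC_mult; ring. Qed.

Lemma LieV_conj (xi : VField) (v : CVField) x mu :
  LieV xi (conjV v) x mu = Cconj (LieV xi v x mu).
Proof.
  unfold LieV, conjV, sum4C; rewrite !pdC_conj, !Cplus_conj, !Cminus_conj, !Cmult_conj,
    !Cconj_RtoC; reflexivity.
Qed.

Lemma Cconj_LieV_liftC (xi v : VField) x mu :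
  Cconj (LieV xi (liftC v) x mu) = LieV xi (liftC v) x mu.
Proof.
  unfold LieV, liftC, sum4C; rewrite !pdC_RtoC, !Cplus_conj, !Cminus_conj, !Cmult_conj,
    !Cconj_RtoC; reflexivity.
Qed.

(** * The tetrad as a frame *)

Definition tetrad (l n : VField) (m : CVField) (i : nat) : CVField :=
  match i with 0%nat => liftC l | 1%nat => liftC n | 2%nat => m | _ => conjV m end.

Definition tetrad_gram (i j : nat) : R :=
  match i, j with
  | 0%nat, 1%nat | 1%nat, 0%nat => 1
  | 2%nat, 3%nat | 3%nat, 2%nat => -1
  | _, _ => 0
  end.

Lemma tetrad_gram_sym i j : tetrad_gram i j = tetrad_gram j i.
Proof. destruct i as [|[|[|[|i]]]]; destruct j as [|[|[|[|j]]]]; reflexivity. Qed.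

Lemma regular_metric (U : Point -> Prop) xi g l n m x :
  regular_data U xi g l n m -> U x ->
  forall mu nu, (mu < 4)%nat -> (nu < 4)%nat -> has_pd (fun y => g y mu nu) x.
Proof. intros Hreg Ux mu nu Hmu Hnu; apply (Hreg x Ux mu Hmu); assumption. Qed.

Lemma regular_tetrad (U : Point -> Prop) xi g l n m x :
  regular_data U xi g l n m -> U x ->
  forall i mu, (mu < 4)%nat -> has_pdC (fun y => tetrad l n m i y mu) x.
Proof.
  intros Hreg Ux i mu Hmu; destruct (Hreg x Ux mu Hmu) as [_ [Hl [Hn [Hre [Him _]]]]].
  destruct i as [|[|[|i]]].
  - exact (has_pdC_RtoC _ x Hl).
  - exact (has_pdC_RtoC _ x Hn).
  - exact (conj Hre Him).
  - exact (has_pdC_conj _ x (conj Hre Him)).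
Qed.

Lemma null_tetrad_gram (U : Point -> Prop) (g : Metric) (l n : VField) (m : CVField) :
  symmetric_metric U g -> null_tetrad U g l n m ->
  forall y, U y -> forall i j, (i < 4)%nat -> (j < 4)%nat ->
    gdot g y (tetrad l n m i y) (tetrad l n m j y) = RtoC (tetrad_gram i j).
Proof.
  intros Hsym HT y Uy i j Hi Hj.
  destruct (HT y Uy) as [LL [NN [MM [BB [LN [MB [LM [LB [NM NB]]]]]]]]]; cbv zeta in *.
  destruct i as [|[|[|[|i]]]]; try lia; destruct j as [|[|[|[|j]]]]; try lia;
    cbn [tetrad tetrad_gram];
    first [assumption | rewrite gdot_sym by (apply Hsym; assumption); assumption].
Qed.

Definition rdot (h : nat -> nat -> R) (u v : nat -> R) : R :=
  sum4 (fun mu => sum4 (fun nu => h mu nu * u mu * v nu)).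

Lemma gdot_pairs (g : Metric) x (ur ui vr vi : nat -> R) :
  gdot g x (fun mu => (ur mu, ui mu)) (fun nu => (vr nu, vi nu)) =
  (rdot (g x) ur vr - rdot (g x) ui vi, rdot (g x) ur vi + rdot (g x) ui vr).
Proof. unfold gdot, rdot, sum4C, sum4; apply injective_projections; simpl; ring. Qed.

Lemma rdot_sym (h : nat -> nat -> R) (u v : nat -> R) :
  (forall mu nu, (mu < 4)%nat -> (nu < 4)%nat -> h mu nu = h nu mu) ->
  rdot h u v = rdot h v u.
Proof.
  intros Hs; unfold rdot, sum4.
  rewrite (Hs 1%nat 0%nat), (Hs 2%nat 0%nat), (Hs 3%nat 0%nat), (Hs 2%nat 1%nat),
    (Hs 3%nat 1%nat), (Hs 3%nat 2%nat) by lia.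
  ring.
Qed.

Lemma rdot_0_l (h : nat -> nat -> R) (v : nat -> R) : rdot h (fun _ => 0) v = 0.
Proof. unfold rdot, sum4; ring. Qed.

Lemma rdot_0_r (h : nat -> nat -> R) (u : nat -> R) : rdot h u (fun _ => 0) = 0.
Proof. unfold rdot, sum4; ring. Qed.

Lemma rdot_opp_r (h : nat -> nat -> R) (u v : nat -> R) :
  rdot h u (fun nu => - v nu) = - rdot h u v.
Proof. unfold rdot, sum4; ring. Qed.

Definition delta (i j : nat) : R := if Nat.eqb i j then 1 else 0.

Module MatrixInverse.
Import all_boot all_algebra Rstruct GRing.Theory.
Local Open Scope ring_scope.

Lemma delta_eqn (i j : nat) : delta i j = (i == j)%:R.
Proof. by rewrite /delta; case: (Nat.eqb_spec i j) => [->|/eqP/negbTE ->]; rewrite ?eqxx. Qed.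

Lemma sum4_inverse_comm (A B : nat -> nat -> R) :
  (forall i j, (i < 4)%coq_nat -> (j < 4)%coq_nat ->
     sum4 (fun k => Rmult (A i k) (B k j)) = delta i j) ->
  forall i j, (i < 4)%coq_nat -> (j < 4)%coq_nat ->
     sum4 (fun k => Rmult (B i k) (A k j)) = delta i j.
Proof.
move=> AB i j /ltP lti /ltP ltj.
pose mx (X : nat -> nat -> R) : 'M[R]_4 := \matrix_(i < 4, j < 4) X i j.
have mulE X Y (i' j' : 'I_4) : (mx X *m mx Y) i' j' = sum4 (fun k => Rmult (X i' k) (Y k j')).
  by rewrite !mxE !big_ord_recr big_ord0 /= !mxE /sum4 /= add0r.
have /mulmx1C BA : mx A *m mx B = 1%:M.
  by apply/matrixP => i' j'; rewrite mulE AB; [rewrite delta_eqn mxE | exact/ltP | exact/ltP].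
have := congr1 (fun M : 'M[R]_4 => M (Ordinal lti) (Ordinal ltj)) BA.
by rewrite /= mulE mxE delta_eqn.
Qed.
End MatrixInverse.

Section TetradFrame.

Variables (U : Point -> Prop) (g : Metric) (l n : VField) (m : CVField) (x : Point).
Hypotheses (Hsym : symmetric_metric U g) (HT : null_tetrad U g l n m) (Ux : U x).

(* With m = a + i b, (l, n, a, b) is a real frame, so completeness can be read off
   from a left inverse of a real 4x4 matrix (sum4_inverse_comm). *)
Definition real_tetrad (i : nat) : nat -> R :=
  match i with
  | 0%nat => l x
  | 1%nat => n x
  | 2%nat => fun k => Re (m x k)
  | _ => fun k => Im (m x k)
  end.

Definition real_gram (i j : nat) : R :=
  match i, j with
  | 0%nat, 1%nat | 1%nat, 0%nat => 1
  | 2%nat, 2%nat | 3%nat, 3%nat => - / 2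
  | _, _ => 0
  end.

Definition real_gram_inv (i j : nat) : R :=
  match i, j with
  | 0%nat, 1%nat | 1%nat, 0%nat => 1
  | 2%nat, 2%nat | 3%nat, 3%nat => -2
  | _, _ => 0
  end.

Definition real_cotetrad (i mu : nat) : R :=
  sum4 (fun j => real_gram_inv i j * sum4 (fun k => real_tetrad j k * g x k mu)).

Lemma real_tetrad_gram i j : (i < 4)%nat -> (j < 4)%nat ->
  rdot (g x) (real_tetrad i) (real_tetrad j) = real_gram i j.
Proof.
  intros Hi Hj.
  assert (Hs : forall mu nu, (mu < 4)%nat -> (nu < 4)%nat -> g x mu nu = g x nu mu)
    by (apply Hsym; assumption).
  destruct (HT x Ux) as [LL [NN [MM [_ [LN [MB [LM [_ [NM _]]]]]]]]]; cbv zeta in *.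
  assert (Em : forall v, gdot g x (m x) v = gdot g x (fun k => (Re (m x k), Im (m x k))) v)
    by (intros; apply gdot_ext; [intros; apply surjective_pairing | reflexivity]).
  assert (Em' : forall u, gdot g x u (m x) = gdot g x u (fun k => (Re (m x k), Im (m x k))))
    by (intros; apply gdot_ext; [reflexivity | intros; apply surjective_pairing]).
  change (liftC l x) with (fun k => (l x k, 0)) in *.
  change (liftC n x) with (fun k => (n x k, 0)) in *.
  change (conjV m x) with (fun k => (Re (m x k), - Im (m x k))) in *.
  rewrite Em, Em' in MM; rewrite Em in MB; rewrite Em' in LM, NM.
  rewrite !gdot_pairs in LL, NN, MM, LN, MB, LM, NM.
  rewrite ?rdot_0_l, ?rdot_0_r, ?rdot_opp_r in *.
  injection LL as LL _; injection NN as NN _; injection MM as MM1 MM2;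
    injection LN as LN _; injection MB as MB _; injection LM as LM1 LM2;
    injection NM as NM1 NM2.
  pose proof (rdot_sym (g x) (fun k => Re (m x k)) (fun k => Im (m x k)) Hs) as Sab.
  destruct i as [|[|[|[|i]]]]; try lia; destruct j as [|[|[|[|j]]]]; try lia;
    cbn [real_tetrad real_gram];
    first [lra | rewrite rdot_sym by exact Hs; lra].
Qed.

Lemma real_cotetrad_tetrad i j : (i < 4)%nat -> (j < 4)%nat ->
  sum4 (fun k => real_cotetrad i k * real_tetrad j k) = delta i j.
Proof.
  intros Hi Hj.
  transitivity (sum4 (fun j' => real_gram_inv i j' * rdot (g x) (real_tetrad j') (real_tetrad j))).
  { unfold real_cotetrad, rdot, sum4; ring. }
  unfold sum4 at 1; rewrite !real_tetrad_gram by lia.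
  destruct i as [|[|[|[|i]]]]; try lia; destruct j as [|[|[|[|j]]]]; try lia;
    cbn [real_gram_inv real_gram delta Nat.eqb]; field.
Qed.

Lemma real_tetrad_complete k mu : (k < 4)%nat -> (mu < 4)%nat ->
  sum4 (fun i => real_tetrad i k * real_cotetrad i mu) = delta k mu.
Proof.
  apply (MatrixInverse.sum4_inverse_comm real_cotetrad (fun k i => real_tetrad i k)).
  exact real_cotetrad_tetrad.
Qed.

Lemma tetrad_expand (w : nat -> C) k : (k < 4)%nat ->
  w k = (RtoC (l x k) * gdot g x (liftC n x) w + RtoC (n x k) * gdot g x (liftC l x) w
         - m x k * gdot g x (conjV m x) w - Cconj (m x k) * gdot g x (m x) w)%C.
Proof.
  intros Hk.
  assert (Hdelta : forall mu, (mu < 4)%nat -> RtoC (delta k mu) =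
    (RtoC (l x k) * sum4C (fun j => RtoC (g x j mu) * RtoC (n x j))
     + RtoC (n x k) * sum4C (fun j => RtoC (g x j mu) * RtoC (l x j))
     - m x k * sum4C (fun j => RtoC (g x j mu) * Cconj (m x j))
     - Cconj (m x k) * sum4C (fun j => RtoC (g x j mu) * m x j))%C).
  { intros mu Hmu; rewrite <- real_tetrad_complete by assumption.
    unfold real_cotetrad, real_gram_inv, real_tetrad, sum4, sum4C.
    apply injective_projections; simpl; unfold Re, Im; ring. }
  transitivity (sum4C (fun mu => RtoC (delta k mu) * w mu))%C.
  { unfold sum4C, delta; destruct k as [|[|[|[|k]]]]; try lia; simpl; ring. }
  erewrite sum4C_ext by (intros mu Hmu; rewrite (Hdelta mu Hmu); reflexivity).
  unfold gdot, liftC, conjV, sum4C; ring.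
Qed.

Lemma tetrad_orthogonal_eq0 (w : nat -> C) :
  (forall i, (i < 4)%nat -> gdot g x (tetrad l n m i x) w = RtoC 0) ->
  forall k, (k < 4)%nat -> w k = RtoC 0.
Proof.
  intros Hw k Hk.
  rewrite (tetrad_expand w k Hk),
    (Hw 0%nat ltac:(lia) : gdot g x (liftC l x) w = _),
    (Hw 1%nat ltac:(lia) : gdot g x (liftC n x) w = _),
    (Hw 2%nat ltac:(lia) : gdot g x (m x) w = _),
    (Hw 3%nat ltac:(lia) : gdot g x (conjV m x) w = _).
  ring.
Qed.

Lemma covector_tetrad_eq0 (theta : nat -> C) :
  (forall i, (i < 4)%nat -> sum4C (fun k => theta k * tetrad l n m i x k)%C = RtoC 0) ->
  forall mu, (mu < 4)%nat -> theta mu = RtoC 0.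
Proof.
  intros Htheta mu Hmu.
  set (e := fun k => RtoC (delta k mu)).
  transitivity (sum4C (fun k => theta k * e k))%C.
  { unfold sum4C, e, delta; destruct mu as [|[|[|[|mu]]]]; try lia; simpl; ring. }
  erewrite sum4C_ext by (intros k Hk; rewrite (tetrad_expand e k Hk) at 1; reflexivity).
  transitivity (gdot g x (liftC n x) e * sum4C (fun k => theta k * tetrad l n m 0 x k)
    + gdot g x (liftC l x) e * sum4C (fun k => theta k * tetrad l n m 1 x k)
    - gdot g x (conjV m x) e * sum4C (fun k => theta k * tetrad l n m 2 x k)
    - gdot g x (m x) e * sum4C (fun k => theta k * tetrad l n m 3 x k))%C.
  { unfold sum4C, tetrad, liftC, conjV; ring. }
  rewrite !Htheta by lia; ring.
Qed.

Lemma form_tetrad_eq0 (h : Metric) :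
  (forall i j, (i < 4)%nat -> (j < 4)%nat ->
     gdot h x (tetrad l n m i x) (tetrad l n m j x) = RtoC 0) ->
  forall mu nu, (mu < 4)%nat -> (nu < 4)%nat -> h x mu nu = 0.
Proof.
  intros Hh mu nu Hmu Hnu.
  assert (Hrow : forall i, (i < 4)%nat ->
            sum4C (fun k => RtoC (h x k nu) * tetrad l n m i x k)%C = RtoC 0).
  { intros i Hi; revert nu Hnu.
    apply (covector_tetrad_eq0 (fun nu => sum4C (fun k => RtoC (h x k nu) * tetrad l n m i x k)%C)).
    intros j Hj; rewrite <- (Hh i j Hi Hj); unfold gdot, sum4C; ring. }
  exact (f_equal fst (covector_tetrad_eq0 (fun k => RtoC (h x k nu)) Hrow mu Hmu)).
Qed.

End TetradFrame.

(** * Lie recurrence versus conformal Killing *)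

Lemma tetrad_leibniz (U : Point -> Prop) g xi l n m x :
  open4 U -> symmetric_metric U g -> regular_data U xi g l n m -> null_tetrad U g l n m ->
  U x -> forall i j, (i < 4)%nat -> (j < 4)%nat ->
  (gdot (LieG xi g) x (tetrad l n m i x) (tetrad l n m j x)
   + gdot g x (LieV xi (tetrad l n m i) x) (tetrad l n m j x)
   + gdot g x (tetrad l n m i x) (LieV xi (tetrad l n m j) x))%C = RtoC 0.
Proof.
  intros HO Hsym Hreg HT Ux i j Hi Hj.
  rewrite <- LieS_gdot
    by first [exact (regular_metric U xi g l n m x Hreg Ux)
             | exact (regular_tetrad U xi g l n m x Hreg Ux _)].
  apply (LieS_locally_const U xi _ (RtoC (tetrad_gram i j)) x HO Ux).
  intros y Uy; apply (null_tetrad_gram U); assumption.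
Qed.

Lemma lie_recurrent_tetrad (U : Point -> Prop) xi phi l n m x :
  lie_recurrent U xi phi l n m -> U x ->
  forall i k, (k < 4)%nat ->
    LieV xi (tetrad l n m i) x k = (RtoC (- / 2 * phi x) * tetrad l n m i x k)%C.
Proof.
  intros Hrec Ux i k Hk; destruct (Hrec x Ux k Hk) as [Rl [Rn Rm]].
  destruct i as [|[|[|i]]]; cbn [tetrad].
  - rewrite Rl, RtoC_mult; reflexivity.
  - rewrite Rn, RtoC_mult; reflexivity.
  - exact Rm.
  - rewrite LieV_conj, Rm, Cmult_conj, Cconj_RtoC; reflexivity.
Qed.

Lemma lie_recurrent_conformal_killing (U : Point -> Prop) g xi phi l n m :
  open4 U -> symmetric_metric U g -> regular_data U xi g l n m -> null_tetrad U g l n m ->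
  lie_recurrent U xi phi l n m -> conformal_killing U g xi phi.
Proof.
  intros HO Hsym Hreg HT Hrec x Ux mu nu Hmu Hnu.
  apply Rminus_diag_uniq.
  apply (form_tetrad_eq0 U g l n m x Hsym HT Ux
           (fun y a b => LieG xi g y a b - phi y * g y a b)); try assumption.
  intros i j Hi Hj.
  assert (HL := tetrad_leibniz U g xi l n m x HO Hsym Hreg HT Ux i j Hi Hj).
  set (c := RtoC (- / 2 * phi x)) in HL.
  rewrite (gdot_ext g x _ (fun k => c * tetrad l n m i x k)%C _ (tetrad l n m j x)),
    (gdot_ext g x (tetrad l n m i x) _ _ (fun k => c * tetrad l n m j x k)%C),
    gdot_scal_l, gdot_scal_r, (null_tetrad_gram U g l n m Hsym HT x Ux) in HL
    by (auto; intros; apply (lie_recurrent_tetrad U xi phi l n m x Hrec Ux); assumption).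
  subst c.
  rewrite gdot_sub_scal_metric, (null_tetrad_gram U g l n m Hsym HT x Ux) by assumption.
  rewrite (RtoC_opp_twice_half (phi x)), <- HL; ring.
Qed.

Lemma preferred_gauge_weights (U : Point -> Prop) g xi l n m x :
  preferred_gauge U g xi l n m -> U x -> forall p q : Z,
  (RtoC (IZR (p + q) / 4) *
     (gdot g x (liftC l x) (LieV xi (liftC n) x) - gdot g x (liftC n x) (LieV xi (liftC l) x))
   + RtoC (IZR (p - q) / 4) *
     (gdot g x (conjV m x) (LieV xi m x) - gdot g x (m x) (LieV xi (conjV m) x)))%C = RtoC 0.
Proof.
  intros Hpg Ux p q.
  assert (H := Hpg p q (fun _ => RtoC 1) x Ux); unfold GHPLie in H.
  apply Ceq_minus in H; rewrite <- H; ring.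
Qed.

Lemma preferred_gauge_boost (U : Point -> Prop) g xi l n m x :
  preferred_gauge U g xi l n m -> U x ->
  gdot g x (liftC l x) (LieV xi (liftC n) x) = gdot g x (liftC n x) (LieV xi (liftC l) x).
Proof.
  intros Hpg Ux; assert (H := preferred_gauge_weights U g xi l n m x Hpg Ux 2 2).
  change (2 + 2)%Z with 4%Z in H; change (2 - 2)%Z with 0%Z in H.
  replace (IZR 4 / 4) with 1 in H by field; replace (0 / 4) with 0 in H by field.
  apply Ceq_minus; rewrite <- H; ring.
Qed.

Lemma preferred_gauge_spin (U : Point -> Prop) g xi l n m x :
  preferred_gauge U g xi l n m -> U x ->
  gdot g x (conjV m x) (LieV xi m x) = gdot g x (m x) (LieV xi (conjV m) x).
Proof.
  intros Hpg Ux; assert (H := preferred_gauge_weights U g xi l n m x Hpg Ux 2 (-2)).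
  change (2 + -2)%Z with 0%Z in H; change (2 - -2)%Z with 4%Z in H.
  replace (IZR 4 / 4) with 1 in H by field; replace (0 / 4) with 0 in H by field.
  apply Ceq_minus; rewrite <- H; ring.
Qed.

Section Converse.

Variables (U : Point -> Prop) (g : Metric) (xi : VField) (phi : Point -> R)
  (l n : VField) (m : CVField) (x : Point).
Hypotheses (HO : open4 U) (Hsym : symmetric_metric U g) (Hreg : regular_data U xi g l n m)
  (HT : null_tetrad U g l n m) (Hdir : preferred_directions U g xi l n m)
  (Hgauge : preferred_gauge U g xi l n m) (Hck : conformal_killing U g xi phi) (Ux : U x).

Definition recurrence_defect (i j : nat) : C :=
  (gdot g x (tetrad l n m i x) (LieV xi (tetrad l n m j) x)
   - RtoC (- / 2 * phi x) * RtoC (tetrad_gram i j))%C.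

Lemma conformal_killing_gdot (u v : nat -> C) :
  gdot (LieG xi g) x u v = (RtoC (phi x) * gdot g x u v)%C.
Proof. unfold gdot, sum4C; rewrite !(Hck x Ux) by lia; rewrite !RtoC_mult; ring. Qed.

Lemma recurrence_defect_antisym i j : (i < 4)%nat -> (j < 4)%nat ->
  (recurrence_defect i j + recurrence_defect j i)%C = RtoC 0.
Proof.
  intros Hi Hj.
  assert (HL := tetrad_leibniz U g xi l n m x HO Hsym Hreg HT Ux i j Hi Hj).
  rewrite conformal_killing_gdot, (null_tetrad_gram U g l n m Hsym HT x Ux) in HL by assumption.
  unfold recurrence_defect.
  rewrite (tetrad_gram_sym j i), (gdot_sym g x (tetrad l n m j x)) by (apply Hsym; assumption).
  rewrite (RtoC_opp_twice_half (phi x)) in HL; rewrite <- HL; ring.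
Qed.

Lemma recurrence_defect_boost : recurrence_defect 0 1 = recurrence_defect 1 0.
Proof.
  unfold recurrence_defect; cbn [tetrad tetrad_gram].
  rewrite (preferred_gauge_boost U g xi l n m x Hgauge Ux); reflexivity.
Qed.

Lemma recurrence_defect_spin : recurrence_defect 3 2 = recurrence_defect 2 3.
Proof.
  unfold recurrence_defect; cbn [tetrad tetrad_gram].
  rewrite (preferred_gauge_spin U g xi l n m x Hgauge Ux); reflexivity.
Qed.

Lemma recurrence_defect_directions :
  recurrence_defect 3 0 = recurrence_defect 0 3 /\ recurrence_defect 2 1 = recurrence_defect 1 2.
Proof.
  destruct (Hdir x Ux) as [Hl Hn]; unfold recurrence_defect; cbn [tetrad tetrad_gram].
  rewrite Hl, Hn; split; reflexivity.
Qed.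

Lemma recurrence_defect_conj :
  recurrence_defect 2 0 = Cconj (recurrence_defect 3 0) /\
  recurrence_defect 1 3 = Cconj (recurrence_defect 1 2).
Proof.
  unfold recurrence_defect; cbn [tetrad tetrad_gram].
  rewrite !Cminus_conj, !Cmult_conj, !Cconj_RtoC, <- !gdot_conj.
  split; f_equal; apply gdot_ext; intros k _.
  - unfold conjV; rewrite Cconj_conj; reflexivity.
  - rewrite Cconj_LieV_liftC; reflexivity.
  - unfold liftC; rewrite Cconj_RtoC; reflexivity.
  - apply LieV_conj.
Qed.

Lemma recurrence_defect_eq0 i j : (i < 4)%nat -> (j < 4)%nat -> recurrence_defect i j = RtoC 0.
Proof.
  assert (Hanti := recurrence_defect_antisym).
  destruct recurrence_defect_directions as [H30 H21].
  destruct recurrence_defect_conj as [H20 H13].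
  assert (Z01 : recurrence_defect 0 1 = RtoC 0)
    by exact (Csym_antisym_eq0 _ _ (Hanti 0%nat 1%nat ltac:(lia) ltac:(lia))
                recurrence_defect_boost).
  assert (Z32 : recurrence_defect 3 2 = RtoC 0)
    by exact (Csym_antisym_eq0 _ _ (Hanti 3%nat 2%nat ltac:(lia) ltac:(lia))
                recurrence_defect_spin).
  assert (Z30 : recurrence_defect 3 0 = RtoC 0)
    by exact (Csym_antisym_eq0 _ _ (Hanti 3%nat 0%nat ltac:(lia) ltac:(lia)) H30).
  assert (Z21 : recurrence_defect 2 1 = RtoC 0)
    by exact (Csym_antisym_eq0 _ _ (Hanti 2%nat 1%nat ltac:(lia) ltac:(lia)) H21).
  assert (Z20 : recurrence_defect 2 0 = RtoC 0) by (rewrite H20, Z30; apply Cconj_RtoC).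
  assert (Z12 : recurrence_defect 1 2 = RtoC 0) by (rewrite <- H21; exact Z21).
  assert (Z13 : recurrence_defect 1 3 = RtoC 0) by (rewrite H13, Z12; apply Cconj_RtoC).
  assert (Hswap : forall i j, (i < 4)%nat -> (j < 4)%nat ->
            recurrence_defect i j = RtoC 0 -> recurrence_defect j i = RtoC 0).
  { intros i' j' Hi' Hj' Z.
    transitivity (recurrence_defect i' j' + recurrence_defect j' i' - recurrence_defect i' j')%C.
    - ring.
    - rewrite (Hanti i' j' Hi' Hj'), Z; ring. }
  intros Hi Hj.
  destruct i as [|[|[|[|i]]]]; try lia; destruct j as [|[|[|[|j]]]]; try lia;
    first [ assumption
          | apply Hswap; [lia | lia | assumption]
          | exact (Csym_antisym_eq0 _ _ (Hanti _ _ Hi Hj) eq_refl) ].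
Qed.

Lemma conformal_killing_tetrad_recurrent j k : (j < 4)%nat -> (k < 4)%nat ->
  LieV xi (tetrad l n m j) x k = (RtoC (- / 2 * phi x) * tetrad l n m j x k)%C.
Proof.
  intros Hj Hk; apply Ceq_minus; revert k Hk.
  apply (tetrad_orthogonal_eq0 U g l n m x Hsym HT Ux); intros i Hi.
  rewrite gdot_sub_scal_r, (null_tetrad_gram U g l n m Hsym HT x Ux) by assumption.
  exact (recurrence_defect_eq0 i j Hi Hj).
Qed.

End Converse.

Lemma conformal_killing_lie_recurrent (U : Point -> Prop) g xi phi l n m :
  open4 U -> symmetric_metric U g -> regular_data U xi g l n m -> null_tetrad U g l n m ->
  preferred_tetrad U g xi l n m ->
  conformal_killing U g xi phi -> lie_recurrent U xi phi l n m.
Proof.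
  intros HO Hsym Hreg HT [Hdir Hgauge] Hck x Ux mu Hmu.
  pose proof (conformal_killing_tetrad_recurrent U g xi phi l n m x
                HO Hsym Hreg HT Hdir Hgauge Hck Ux) as Hrec.
  split; [| split].
  - rewrite (RtoC_mult (- / 2 * phi x)); exact (Hrec 0%nat mu ltac:(lia) Hmu).
  - rewrite (RtoC_mult (- / 2 * phi x)); exact (Hrec 1%nat mu ltac:(lia) Hmu).
  - exact (Hrec 2%nat mu ltac:(lia) Hmu).
Qed.

Theorem lemma13 (U : Point -> Prop) (g : Metric) (xi : VField)
  (phi : Point -> R) (l n : VField) (m : CVField) :
  open4 U ->
  symmetric_metric U g ->
  regular_data U xi g l n m ->
  null_tetrad U g l n m ->
  preferred_tetrad U g xi l n m ->
  (lie_recurrent U xi phi l n m <-> conformal_killing U g xi phi).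
Proof.
  intros HO Hsym Hreg HT Hpref; split.
  - apply lie_recurrent_conformal_killing; assumption.
  - apply conformal_killing_lie_recurrent; assumption.
Qed.
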